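(* In the setting of the context, let $(b_{\mathbf{k}})_{\mathbf{k}\in\mathbb{N}^r}$ be a family of elements of $R$ with only finitely many nonzero. Then $\sum_{\mathbf{k}}b_{\mathbf{k}}(\mathbf{x})_{\mathbf{k}}\sim0$ if and only if $b_{\mathbf{k}}(\mathbf{x})_{\mathbf{k}}\sim0$ for every $\mathbf{k}\in\mathbb{N}^r$.
   Context: $D$ is a Dedekind domain, $r\ge1$, and $I_1,\ldots,I_r,J$ are ideals of $D$ different from $0$ and $D$. For each $i$ a complete set of residues $\mathcal{D}_{I_i}\subseteq D$ modulo $I_i$ with $0\in\mathcal{D}_{I_i}$ is fixed. Let $K=I_1\cap\cdots\cap I_r\cap J$, $R=D/K$, and $\bar I=I/K$ for ideals $I\supseteq K$. Let $X_i\subseteq R$ be the image of $\mathcal{D}_{I_i}$ in $R$. Write $K=P_1^{e_1}\cdots P_n^{e_n}$; the nonzero primes of $R$ are $\bar P_1,\ldots,\bar P_n$. For a nonzero prime $\bar P$ of $R$ and $a\in R$, $w_{\bar P}(a)$ is the highest power of $\bar P$ containing $a$ ($w_{\bar P}(0)=0$). A $\bar P$-ordering of $X\subseteq R$ is a sequence $b_0,b_1,\ldots$ in $X$, $b_0$ arbitrary, with each $b_k$ chosen to make $w_{\bar P}((b_k-b_0)\cdots(b_k-b_{k-1}))$ as large as possible. For each $i,l$ fix a $\bar P_l$-ordering $(a_{l,i,j})_j$ of $X_i$ with $a_{l,i,0}=0$, and let $a_{i,j}\in R$ satisfy $a_{i,0}=0$, $a_{i,j}\equiv a_{l,i,j}\pmod{\bar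 P_l^{e_l}}$ for all $l$. Set $(\mathbf{x})_{\mathbf{k}}=\prod_{i=1}^r (x_i)_{k_i}$ with $(x_i)_0=1$, $(x_i)_k=\prod_{j=0}^{k-1}(x_i-a_{i,j})$. For $F,G\in R[x_1,\ldots,x_r]$, $F\sim G$ means $F(\mathbf{c})-G(\mathbf{c})\in\bar J$ for all $\mathbf{c}\in X_1\times\cdots\times X_r$. *)

From HB Require Import structures.
From mathcomp Require Import all_boot all_order all_algebra.
From mathcomp Require Import fraction.
Set Implicit Arguments. Unset Strict Implicit. Unset Printing Implicit Defensive.
Import Order.TTheory GRing.Theory Num.Theory.
Local Open Scope ring_scope.

Section Ideals.
Variable D : idomainType.

Definition subsetD (A B : D -> Prop) : Prop := forall x, A x -> B x.
Definition eqsetD (A B : D -> Prop) : Prop := forall x, A x <-> B x.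

Definition is_ideal (I : D -> Prop) : Prop :=
  [/\ I 0, (forall x y, I x -> I y -> I (x + y)) & (forall a x, I x -> I (a * x))].

Definition ideal_nonzero (I : D -> Prop) : Prop := exists2 x, I x & x != 0.
Definition ideal_proper (I : D -> Prop) : Prop := ~ I 1.

Definition prime_ideal (I : D -> Prop) : Prop :=
  [/\ is_ideal I, ideal_proper I & forall x y, I (x * y) -> I x \/ I y].

Definition maximal_ideal (I : D -> Prop) : Prop :=
  [/\ is_ideal I, ideal_proper I &
      forall J, is_ideal J -> subsetD I J -> ideal_proper J -> subsetD J I].

Definition idsum (I J : D -> Prop) : D -> Prop :=
  fun x => exists a b, [/\ I a, J b & x = a + b].
Definition idmul (I J : D -> Prop) : D -> Prop :=
  fun x => exists s : seq (D * D),
    (forall p, p \in s -> I p.1 /\ J p.2) /\ x = \sum_(p <- s) p.1 * p.2.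
Definition idfull : D -> Prop := fun _ => True.
Fixpoint idpow (I : D -> Prop) (m : nat) : D -> Prop :=
  if m is m'.+1 then idmul (idpow I m') I else idfull.

Definition noetherian : Prop :=
  forall C : nat -> D -> Prop, (forall k, is_ideal (C k)) ->
    (forall k, subsetD (C k) (C k.+1)) ->
    exists N, forall k, (N <= k)%N -> subsetD (C k) (C N).

Definition integrally_closed : Prop :=
  forall x : {fraction D},
    (exists2 p : {poly D}, p \is monic & root (map_poly (@tofrac D) p) x) ->
    exists d : D, x = tofrac d.

Definition dim_le1 : Prop :=
  forall P, prime_ideal P -> ideal_nonzero P -> maximal_ideal P.

Definition dedekind : Prop := [/\ noetherian, integrally_closed & dim_le1].

Definition residue_system (I S : D -> Prop) : Prop :=
  (forall x, exists2 d, S d & I (x - d)) /\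
  (forall d d', S d -> S d' -> I (d - d') -> d = d').

(* ---- The ring R = D/K, represented through representatives in D ---- *)
(* The image in R of an ideal A (containing K, or A + K in general) has preimage idsum A K. *)
(* w_{Pbar}(a) : the ideal of R (given by its preimage in D): the zero ideal if a = 0 in R,
   otherwise the smallest power Pbar^m containing a (intersection of the powers containing a). *)
Definition wP (K P : D -> Prop) (a : D) : D -> Prop :=
  fun x => (K a -> K x) /\
           (~ K a -> forall m, idsum (idpow P m) K a -> idsum (idpow P m) K x).

Definition is_Pordering (K P X : D -> Prop) (b : nat -> D) : Prop :=
  (forall k, X (b k)) /\
  forall k, (0 < k)%N -> forall c, X c ->
    subsetD (wP K P (\prod_(j < k) (c - b j))) (wP K P (\prod_(j < k) (b k - b j))).

Definition imgR (K S : D -> Prop) : D -> Prop := fun x => exists2 d, S d & K (x - d).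

Definition falling (a : nat -> D) (x : D) (k : nat) : D := \prod_(j < k) (x - a j).

Definition mfalling (r : nat) (a : 'I_r -> nat -> D) (x : 'I_r -> D) (k : {ffun 'I_r -> nat}) : D :=
  \prod_(i < r) falling (a i) (x i) (k i).

End Ideals.

(* Coefficients [b_k] with some [k_i >= N] lie in [K], which is contained in [J]. Else we
   induct on [k_1 + ... + k_r]; by the Chinese remainder theorem for [K = prod_l P_l^e_l]
   it suffices to show [b_m (c)_m] in [J + P_l^e_l] for each [l]. Evaluating the sum at
   the node [p_i = a_(l,i,m_i)], the terms below [m] lie in [J] by induction and those
   with some [k_i > m_i] vanish modulo [P_l^e_l], so [b_m (p)_m] is in [J + P_l^e_l].
   Finally the defining property of a [P_l]-ordering says that [(c_i)_(m_i)] is at least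
   as divisible by [P_l] as [(p_i)_(m_i)]; as [P_l] becomes principal modulo any of its
   powers (this is where the Dedekind hypothesis enters), [(c)_m] is a multiple of
   [(p)_m] modulo [P_l^e_l]. *)

From HB Require Import structures.
From mathcomp Require Import all_boot all_order all_algebra fraction ring.
From Stdlib Require Import Classical ClassicalEpsilon.
Set Implicit Arguments. Unset Strict Implicit. Unset Printing Implicit Defensive.
Import GRing.Theory.
Local Open Scope ring_scope.

Section IdealArithmetic.
Variable D : idomainType.
Implicit Types A B C : D -> Prop.

Lemma ideal0 A : is_ideal A -> A 0. Proof. by case. Qed.

Lemma idealD A x y : is_ideal A -> A x -> A y -> A (x + y).
Proof. by case=> _ H _; apply: H. Qed.

Lemma idealM A c x : is_ideal A -> A x -> A (c * x).
Proof. by case=> _ _ H; apply: H. Qed.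

Lemma idealMr A c x : is_ideal A -> A x -> A (x * c).
Proof. by move=> hA hx; rewrite mulrC; apply: idealM. Qed.

Lemma idealN A x : is_ideal A -> A x -> A (- x).
Proof. by move=> hA hx; rewrite -mulN1r; apply: idealM. Qed.

Lemma idealB A x y : is_ideal A -> A x -> A y -> A (x - y).
Proof. by move=> hA hx hy; apply: idealD => //; apply: idealN. Qed.

Lemma ideal_sum A (I : Type) (s : seq I) (Pr : pred I) (f : I -> D) :
  is_ideal A -> (forall i, Pr i -> A (f i)) -> A (\sum_(i <- s | Pr i) f i).
Proof.
move=> hA H; apply: big_ind => //; first exact: ideal0.
by move=> x y; apply: idealD.
Qed.

Lemma eqset_ideal A B : eqsetD A B -> is_ideal A -> is_ideal B.
Proof.
move=> eAB [h0 hD hM]; split; first by apply/eAB.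
- by move=> x y /eAB hx /eAB hy; apply/eAB; apply: hD.
- by move=> c x /eAB hx; apply/eAB; apply: hM.
Qed.

Lemma idfull_ideal : is_ideal (@idfull D). Proof. by split. Qed.

Lemma idmul_ideal A B : is_ideal A -> is_ideal (idmul A B).
Proof.
move=> hA; split.
- by exists [::]; split => //; rewrite big_nil.
- move=> x y [s1 [h1 ->]] [s2 [h2 ->]]; exists (s1 ++ s2); split; last by rewrite big_cat.
  by move=> p; rewrite mem_cat => /orP [] ?; [apply: h1|apply: h2].
- move=> c x [s [h ->]]; exists [seq (c * p.1, p.2) | p <- s]; split.
  + move=> p /mapP [q hq ->] /=; have [h1 h2] := h q hq; split => //.
    exact: idealM.
  + by rewrite big_map mulr_sumr; apply: eq_bigr => p _ /=; rewrite mulrA.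
Qed.

Lemma idmul_mem A B x y : A x -> B y -> idmul A B (x * y).
Proof.
move=> hx hy; exists [:: (x, y)]; split; last by rewrite big_seq1.
by move=> p; rewrite inE => /eqP ->.
Qed.

Lemma idmul_sub A B C : is_ideal C -> (forall x y, A x -> B y -> C (x * y)) ->
  subsetD (idmul A B) C.
Proof.
move=> hC H x [s [hs ->]]; rewrite big_seq; apply: ideal_sum => // p hp.
by have [h1 h2] := hs p hp; apply: H.
Qed.

Lemma idmul_subl A B : is_ideal A -> subsetD (idmul A B) A.
Proof. by move=> hA; apply: idmul_sub => // x y hx _; apply: idealMr. Qed.

Lemma idmul_subr A B : is_ideal B -> subsetD (idmul A B) B.
Proof. by move=> hB; apply: idmul_sub => // x y _ hy; apply: idealM. Qed.

Lemma idpow_ideal A m : is_ideal A -> is_ideal (idpow A m).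
Proof. by move=> hA; elim: m => [|m IH] /=; [exact: idfull_ideal | exact: idmul_ideal]. Qed.

Lemma idpow_mono A m m' : is_ideal A -> (m <= m')%N -> subsetD (idpow A m') (idpow A m).
Proof.
move=> hA /subnK <-; elim: (m' - m)%N => [|k IH] x //= hx.
by apply: IH; apply: idmul_subl (idpow_ideal _ hA) _ hx.
Qed.

Lemma idpow_exp A x m : A x -> idpow A m (x ^+ m).
Proof. by move=> hx; elim: m => [|m IH] //=; rewrite exprSr; apply: idmul_mem. Qed.

Lemma idsum_ideal A B : is_ideal A -> is_ideal B -> is_ideal (idsum A B).
Proof.
move=> hA hB; split.
- by exists 0, 0; split; rewrite ?addr0 //; apply: ideal0.
- move=> x y [a [b [ha hb ->]]] [a' [b' [ha' hb' ->]]].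
  exists (a + a'), (b + b'); split; [exact: idealD|exact: idealD|].
  by rewrite addrACA.
- move=> c x [a [b [ha hb ->]]]; exists (c * a), (c * b).
  by split; [exact: idealM|exact: idealM|rewrite mulrDr].
Qed.

Lemma idsum_l A B x : is_ideal B -> A x -> idsum A B x.
Proof. by move=> hB hx; exists x, 0; split; rewrite ?addr0 //; apply: ideal0. Qed.

Lemma idsum_r A B x : is_ideal A -> B x -> idsum A B x.
Proof. by move=> hA hx; exists 0, x; split; rewrite ?add0r //; apply: ideal0. Qed.

Lemma idsum_sub A B C : is_ideal C -> subsetD A C -> subsetD B C -> subsetD (idsum A B) C.
Proof. by move=> hC hA hB x [a [b [ha hb ->]]]; apply: idealD => //; [apply: hA|apply: hB]. Qed.

Lemma big_idmul_ideal (I : Type) (s : seq I) (F : I -> D -> Prop) :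
  (forall l, is_ideal (F l)) -> is_ideal (\big[@idmul D/@idfull D]_(l <- s) F l).
Proof.
move=> H; elim: s => [|x s IH]; first by rewrite big_nil; exact: idfull_ideal.
by rewrite big_cons; exact: idmul_ideal.
Qed.

Lemma big_idmul_sub (I : eqType) (s : seq I) (F : I -> D -> Prop) l :
  (forall l, is_ideal (F l)) -> l \in s ->
  subsetD (\big[@idmul D/@idfull D]_(l <- s) F l) (F l).
Proof.
move=> H; elim: s => [|x s IH] //; rewrite inE big_cons => /orP [/eqP -> | hl] y hy.
  exact: idmul_subl (H x) _ hy.
by apply: IH => //; exact: idmul_subr (big_idmul_ideal s H) _ hy.
Qed.

Lemma prime_ideal_ideal A : prime_ideal A -> is_ideal A. Proof. by case. Qed.

Lemma prime_notM A x y : prime_ideal A -> ~ A x -> ~ A y -> ~ A (x * y).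
Proof. by case=> _ _ H hx hy /H []. Qed.

Lemma prime_not_prod A (I : finType) (f : I -> D) : prime_ideal A ->
  (forall i, ~ A (f i)) -> ~ A (\prod_i f i).
Proof.
move=> hA H; rewrite -big_enum; elim: (enum I) => [|x s IH].
  by rewrite big_nil; case: hA.
by rewrite big_cons; apply: prime_notM.
Qed.

End IdealArithmetic.

Section Noetherian.
Variables (D : idomainType) (hN : noetherian D).

Lemma noetherian_maximal (F : (D -> Prop) -> Prop) :
  (forall Q, F Q -> is_ideal Q) -> (exists Q, F Q) ->
  exists Q, F Q /\ forall Q', F Q' -> subsetD Q Q' -> subsetD Q' Q.
Proof.
move=> hF [Q0 hQ0]; apply: NNPP => Hn.
pose bigger Q Q' := F Q' /\ subsetD Q Q' /\ ~ subsetD Q' Q.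
have H : forall Q, F Q -> exists Q', bigger Q Q'.
  move=> Q hQ; apply: NNPP => H1; apply: Hn; exists Q; split => // Q' h1 h2.
  by apply: NNPP => h3; apply: H1; exists Q'.
pose nxt Q := epsilon (inhabits Q0) (bigger Q).
pose C k := iter k nxt Q0.
have hC : forall k, F (C k) /\ bigger (C k) (C k.+1).
  elim=> [|k [hk _]]; last have hk1 := epsilon_spec (inhabits Q0) _ (H _ hk).
    by split => //; apply: epsilon_spec (H _ hQ0).
  by split; [case: hk1 | apply: epsilon_spec (H _ hk1.1)].
have [M HM] := @hN C (fun k => hF _ (hC k).1) (fun k => (hC k).2.2.1).
by apply: (hC M).2.2.2; apply: HM.
Qed.

Definition span (gs : seq D) : D -> Prop :=
  fun x => exists cs : nat -> D, x = \sum_(i < size gs) cs i * gs`_i.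

Lemma span_ideal gs : is_ideal (span gs).
Proof.
split.
- by exists (fun _ => 0); rewrite big1 // => i _; rewrite mul0r.
- move=> x y [c1 ->] [c2 ->]; exists (fun i => c1 i + c2 i).
  by rewrite -big_split; apply: eq_bigr => i _; rewrite mulrDl.
- move=> c x [c1 ->]; exists (fun i => c * c1 i).
  by rewrite mulr_sumr; apply: eq_bigr => i _; rewrite mulrA.
Qed.

Lemma span_head g gs : span (g :: gs) g.
Proof.
exists (fun i => if i is 0%N then 1 else 0); rewrite big_ord_recl /= mul1r big1 ?addr0 //.
by move=> i _; rewrite mul0r.
Qed.

Lemma span_cons g gs : subsetD (span gs) (span (g :: gs)).
Proof.
move=> x [cs ->]; exists (fun i => if i is i'.+1 then cs i' else 0).
by rewrite big_ord_recl /= mul0r add0r.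
Qed.

Lemma span_nonzero gs x : span gs x -> x != 0 -> exists i : 'I_(size gs), gs`_i != 0.
Proof.
move=> [cs ->] hx; apply: NNPP => H; move/eqP: hx; apply; apply: big1 => i _.
have : ~ (gs`_i != 0) by move=> h; apply: H; exists i.
by move/negP; rewrite negbK => /eqP ->; rewrite mulr0.
Qed.

Lemma noetherian_span A : is_ideal A ->
  exists gs : seq D, (forall i, (i < size gs)%N -> A gs`_i) /\ subsetD A (span gs).
Proof.
move=> hA.
pose F Q := exists gs : seq D, (forall i, (i < size gs)%N -> A gs`_i) /\ Q = span gs.
have [Q [[gs [h1 ->]] hmax]] : exists Q, F Q /\ forall Q', F Q' -> subsetD Q Q' -> subsetD Q' Q.
  apply: noetherian_maximal; last by exists (span [::]), [::].
  by move=> Q [gs [_ ->]]; apply: span_ideal.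
exists gs; split => // x hx.
apply: (hmax (span (x :: gs))); last exact: span_head.
- by exists (x :: gs); split => // -[|i] //= hi; exact: h1.
- exact: span_cons.
Qed.

End Noetherian.

Section Comaximal.
Variable D : idomainType.
Implicit Types A B C : D -> Prop.

Definition comax A B := exists x y, [/\ A x, B y & x + y = 1].

Lemma comax_sym A B : comax A B -> comax B A.
Proof. by move=> [x [y [hx hy e]]]; exists y, x; split => //; rewrite addrC. Qed.

Lemma maximal_inv_mod A s : maximal_ideal A -> ~ A s -> exists t p, A p /\ 1 = s * t + p.
Proof.
case=> hA hpr hmax hs; apply: NNPP => H.
pose As := fun x => exists t p, A p /\ x = s * t + p.
have hAs : is_ideal As.
  split.
  - by exists 0, 0; split; [apply: ideal0 | rewrite mulr0 addr0].
  - move=> x y [t [p [hp ->]]] [t' [p' [hp' ->]]]; exists (t + t'), (p + p').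
    by split; [exact: idealD | rewrite mulrDr addrACA].
  - move=> c x [t [p [hp ->]]]; exists (c * t), (c * p).
    by split; [exact: idealM | rewrite mulrDr mulrCA].
have sub : subsetD A As by move=> x hx; exists 0, x; split; rewrite ?mulr0 ?add0r.
have hAsp : ideal_proper As by move=> [t [p [hp e]]]; apply: H; exists t, p.
apply: hs; apply: (hmax As hAs sub hAsp); exists 1, 0.
by split; [exact: ideal0 | rewrite mulr1 addr0].
Qed.

(* from [1 = s t + p], use [1 - p^E = (1 - p) (1 + p + ... + p^(E-1))] *)
Lemma maximal_inv_mod_pow A s E : maximal_ideal A -> ~ A s ->
  exists t q, idpow A E q /\ s * t = 1 - q.
Proof.
move=> hM hs; have [t [p [hp e1]]] := maximal_inv_mod hM hs.
exists (t * \sum_(i < E) p ^+ i), (p ^+ E); split; first exact: idpow_exp.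
rewrite mulrA.
have -> : s * t = 1 - p by rewrite e1 addrK.
by rewrite -[1 - p ^+ E]opprB subrX1 -mulNr opprB.
Qed.

Lemma maximal_comax A B : maximal_ideal A -> is_ideal B -> (exists2 y, B y & ~ A y) ->
  comax A B.
Proof.
move=> hM hB [y hy hny]; have [t [p [hp e]]] := maximal_inv_mod hM hny.
by exists p, (y * t); split; [|exact: idealMr|rewrite e addrC].
Qed.

Lemma maximal_comax_neq A B : maximal_ideal A -> maximal_ideal B -> ~ eqsetD A B ->
  comax A B.
Proof.
move=> hA hB hAB; apply: maximal_comax => //; first by case: hB.
apply: NNPP => Hn.
have sBA : subsetD B A by move=> y hy; apply: NNPP => hny; apply: Hn; exists y.
case: hB => hBi hBp hBmax; case: hA => hAi hAp _.
by apply: hAB => x; split; [apply: hBmax | apply: sBA].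
Qed.

Lemma comax_idmul A B C : is_ideal A -> comax A B -> comax A C -> comax A (idmul B C).
Proof.
move=> hA [a [b [ha hb e1]]] [a' [c [ha' hc e2]]].
exists (a * (a' + c) + b * a'), (b * c); split.
- by apply: (idealD hA); [apply: idealMr | apply: idealM].
- exact: idmul_mem.
- by rewrite -addrA -mulrDr -mulrDl e1 e2 mulr1.
Qed.

Lemma comax_idfull A : is_ideal A -> comax A (@idfull D).
Proof. by exists 0, 1; split => //; [apply: ideal0 | rewrite add0r]. Qed.

Lemma comax_idpow A B m : is_ideal A -> comax A B -> comax A (idpow B m).
Proof.
move=> hA h; elim: m => [|m IH] /=; [exact: comax_idfull | exact: comax_idmul].
Qed.

Lemma comax_big_idmul A (I : eqType) (s : seq I) (F : I -> D -> Prop) : is_ideal A ->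
  (forall l, l \in s -> comax A (F l)) -> comax A (\big[@idmul D/@idfull D]_(l <- s) F l).
Proof.
move=> hA; elim: s => [|x s IH] H; first by rewrite big_nil; exact: comax_idfull.
rewrite big_cons; apply: comax_idmul => //; first by apply: H; rewrite mem_head.
by apply: IH => l hl; apply: H; rewrite inE hl orbT.
Qed.

Lemma idsum_idmul_comax J A B x : is_ideal J -> is_ideal A -> comax A B ->
  idsum J A x -> idsum J B x -> idsum J (idmul A B) x.
Proof.
move=> hJ hA [u [v [hu hv e]]] [j1 [a1 [hj1 ha1 e1]]] [j2 [b2 [hj2 hb2 e2]]].
exists (j1 * v + j2 * u), (a1 * v + u * b2); split.
- by apply: (idealD hJ); apply: idealMr.
- by apply: (idealD (idmul_ideal _ hA)); apply: idmul_mem.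
- rewrite -[LHS]mulr1 -e mulrDr.
  transitivity (x * v + x * u); first by rewrite addrC.
  rewrite {1}e1 {1}e2; ring.
Qed.

Lemma idsum_big_idmul_comax J (I : eqType) (s : seq I) (F : I -> D -> Prop) x :
  is_ideal J -> (forall l, is_ideal (F l)) -> uniq s ->
  (forall l l', l != l' -> comax (F l) (F l')) ->
  (forall l, l \in s -> idsum J (F l) x) -> idsum J (\big[@idmul D/@idfull D]_(l <- s) F l) x.
Proof.
move=> hJ hF; elim: s => [|y s IH] hu hc H; first by rewrite big_nil; apply: idsum_r.
rewrite big_cons; case/andP: hu => hy hu.
apply: idsum_idmul_comax => //.
- apply: comax_big_idmul => // l hl; apply: hc; apply/eqP => eyl.
  by move: hy; rewrite eyl hl.
- by apply: H; rewrite mem_head.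
- by apply: IH => // l hl; apply: H; rewrite inE hl orbT.
Qed.

End Comaximal.

Section Uniformizer.
Variable D : idomainType.
Implicit Types P : D -> Prop.

(* [locmul P x] is the contraction to [D] of the principal ideal [x D_P] *)
Definition locmul P (x : D) : D -> Prop :=
  fun d => exists s c, ~ P s /\ s * d = x * c.

Lemma locmul_ideal P x : prime_ideal P -> is_ideal (locmul P x).
Proof.
move=> hP; split.
- by exists 1, 0; split; [case: hP | rewrite !mulr0].
- move=> d d' [s [c [hs e1]]] [s' [c' [hs' e2]]]; exists (s * s'), (c * s' + s * c').
  split; first exact: prime_notM.
  transitivity (s' * (s * d) + s * (s' * d')); first ring.
  by rewrite e1 e2; ring.
- move=> t d [s [c [hs e1]]]; exists s, (t * c); split => //.
  by rewrite mulrCA e1 mulrCA.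
Qed.

Lemma locmul_cancel P x s d : prime_ideal P -> ~ P s -> locmul P x (s * d) -> locmul P x d.
Proof.
move=> hP hs [t [c [ht e1]]]; exists (t * s), c.
by split; [exact: prime_notM | rewrite -mulrA].
Qed.

(* Choose [z] with [{t | t z in x D_P}] maximal: that ideal is then prime and nonzero,
   hence equal to [P]. *)
Lemma locmul_colon_proper P x : noetherian D -> dim_le1 D ->
  prime_ideal P -> P x -> x != 0 ->
  exists z, ~ locmul P x z /\ forall p, P p -> locmul P x (p * z).
Proof.
move=> hN hdim hP hxP hx0; have hL := locmul_ideal x hP.
pose colon d := fun t => locmul P x (t * d).
have colon_ideal : forall d, is_ideal (colon d).
  move=> d; split.
  - by rewrite /colon mul0r; apply: ideal0.
  - by move=> t t' ht ht'; rewrite /colon mulrDl; apply: idealD.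
  - by move=> c t ht; rewrite /colon -mulrA; apply: idealM.
pose F Q := exists d, ~ locmul P x d /\ Q = colon d.
have F_ideal : forall Q, F Q -> is_ideal Q by move=> Q [d [_ ->]].
have F1 : F (colon 1).
  exists 1; split => // -[s [c [hs e1]]]; apply: hs; rewrite mulr1 in e1.
  by rewrite e1; apply: idealMr => //; case: hP.
have [Q [[d0 [hd0 ->]] hmax]] := noetherian_maximal hN F_ideal (ex_intro _ _ F1).
exists d0; split => // p hp.
have hQ : prime_ideal (colon d0).
  split => //; first by rewrite /ideal_proper /colon mul1r.
  move=> t t' htt'; case: (classic (colon d0 t)) => ht; [by left|right].
  have : subsetD (colon (t * d0)) (colon d0).
    apply: hmax; first by exists (t * d0).
    by move=> c hc; rewrite /colon mulrCA; apply: idealM.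
  by apply; rewrite /colon mulrA [t' * t]mulrC.
have hQnz : ideal_nonzero (colon d0).
  by exists x => //; exists 1, d0; split; [case: hP | rewrite mul1r].
have [_ _ hM] := hdim _ hQ hQnz.
apply: (hM P (prime_ideal_ideal hP)) => //; last by case: hP.
by move=> t ht; apply: NNPP => hnt; apply: hd0; exact: locmul_cancel hnt ht.
Qed.

Lemma eigenvalue_integral (hIC : integrally_closed D) t (M : 'M[D]_t)
    (v : 'rV[{fraction D}]_t) y :
  v != 0 -> v *m map_mx (@tofrac D) M = y *: v -> exists d, y = tofrac d.
Proof.
move=> v0 hv; apply: hIC; exists (char_poly M); first exact: char_poly_monic.
by rewrite map_char_poly -eigenvalue_root_char; apply/eigenvalueP; exists v.
Qed.

(* Determinant trick: with [P = (g_1, ..., g_t)] and [S] the product of the denominators,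
   [S z / x] is an eigenvalue of an integer matrix acting on the vector of the [g_i]. *)
Lemma locmul_of_colon_in_prime P x z : noetherian D -> integrally_closed D ->
  prime_ideal P -> P x -> x != 0 ->
  (forall p, P p -> exists s w, [/\ ~ P s, P w & s * (p * z) = x * w]) -> locmul P x z.
Proof.
move=> hN hIC hP hxP hx0 Hz.
have [gs [hgs hspan]] := noetherian_span hN (prime_ideal_ideal hP).
pose t := size gs.
have H1 : forall i : 'I_t, exists f : D * (nat -> D),
    ~ P f.1 /\ f.1 * (gs`_i * z) = x * \sum_(j < t) f.2 j * gs`_j.
  move=> i; have [s [w [hs hw e]]] := Hz _ (hgs i (ltn_ord i)).
  have [cs ecs] := hspan w hw.
  by exists (s, cs); split => //=; rewrite e ecs.
have [f hf] := fin_all_exists H1.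
pose s_ i := (f i).1; pose S := \prod_i s_ i.
have hS : ~ P S by apply: prime_not_prod => // i; case: (hf i).
pose M : 'M[D]_t := \matrix_(j, i) ((\prod_(k | k != i) s_ k) * (f i).2 j).
have eqM : forall i : 'I_t, S * (gs`_i * z) = x * \sum_(j < t) M j i * gs`_j.
  move=> i; rewrite /S (bigD1 i) //= -mulrA mulrCA {1}/s_ (hf i).2 mulrCA; congr (_ * _).
  by rewrite mulr_sumr; apply: eq_bigr => j _; rewrite mxE mulrA.
pose tau := @tofrac D.
pose y := tau (S * z) / tau x.
have tx0 : tau x != 0 by rewrite tofrac_eq0.
pose v : 'rV[{fraction D}]_t := \row_j tau gs`_j.
have hv : v *m map_mx tau M = y *: v.
  apply/rowP => i; rewrite !mxE.
  have -> : \sum_j v 0 j * map_mx tau M j i = tau (\sum_(j < t) M j i * gs`_j).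
    by rewrite /tau rmorph_sum; apply: eq_bigr => j _; rewrite !mxE rmorphM mulrC.
  rewrite /y -mulrA mulrC; apply: (mulfI tx0).
  by rewrite !mulrA mulfV // mul1r /tau -!rmorphM -eqM; congr tofrac; ring.
have v0 : v != 0.
  have [i hi] := span_nonzero (hspan x hxP) hx0.
  by apply/eqP => /rowP /(_ i); rewrite !mxE => /eqP; rewrite tofrac_eq0 (negbTE hi).
have [d hd] := eigenvalue_integral hIC v0 hv.
exists S, d; split => //; apply/eqP; rewrite -tofrac_eq; apply/eqP.
have -> : tofrac (x * d) = tau x * y by rewrite hd /tau rmorphM.
by rewrite /y [tau x * _]mulrC divfK.
Qed.

Lemma local_uniformizer P E : dedekind D -> prime_ideal P -> ideal_nonzero P ->
  exists pi, P pi /\ forall q, P q -> exists d r, idpow P E r /\ q = pi * d + r.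
Proof.
move=> [hN hIC hdim] hP hnz; have hM := hdim P hP hnz.
case: hnz => x hxP hx0.
have [z [hz hzP]] := locmul_colon_proper hN hdim hP hxP hx0.
have z0 : z != 0.
  by apply/eqP => z0; apply: hz; rewrite z0; apply: ideal0 (locmul_ideal x hP).
have [p [s [w [hp hs hw e1]]]] : exists p s w, [/\ P p, ~ P s, ~ P w & s * (p * z) = x * w].
  apply: NNPP => HA; apply: hz; apply: locmul_of_colon_in_prime => // p hp.
  have [s [c [hs e]]] := hzP p hp; exists s, c; split => //.
  by apply: NNPP => hc; apply: HA; exists p, s, c.
exists p; split => // q hq.
have [sq [cq [hsq e2]]] := hzP q hq.
have key : sq * w * q = s * cq * p.
  apply: (mulfI z0).
  transitivity (w * (sq * (q * z))); first ring.
  transitivity (cq * (s * (p * z))); last ring.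
  by rewrite e2 e1; ring.
have [a [r [hr e3]]] := maximal_inv_mod_pow E hM (prime_notM hP hsq hw).
exists (s * cq * a), (q * r); split.
  by apply: idealM => //; apply: idpow_ideal; case: hP.
transitivity ((sq * w * q) * a + q * r).
  by rewrite -[in LHS](mulr1 q) -[1](subrK r) -e3; ring.
by rewrite key; ring.
Qed.

End Uniformizer.

Section DivisibilityModPower.
Variables (D : idomainType) (P : D -> Prop) (e : nat).
Hypothesis hP : is_ideal P.

Definition pi_mult (x : D) (t : nat) : D -> Prop :=
  fun u => exists d q, idpow P e q /\ u = x ^+ t * d + q.

Lemma pi_mult_ideal x t : is_ideal (pi_mult x t).
Proof.
have hPe := idpow_ideal e hP; split.
- by exists 0, 0; split; [apply: ideal0 | rewrite mulr0 addr0].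
- move=> u v [d [q [hq ->]]] [d' [q' [hq' ->]]]; exists (d + d'), (q + q').
  by split; [exact: idealD | rewrite mulrDr addrACA].
- move=> c u [d [q [hq ->]]]; exists (c * d), (c * q).
  by split; [exact: idealM | rewrite mulrDr mulrCA].
Qed.

Lemma idpow_sub_pi_mult pi t :
  (forall q, P q -> exists d r, idpow P e r /\ q = pi * d + r) ->
  subsetD (idpow P t) (pi_mult pi t).
Proof.
have hPe := idpow_ideal e hP.
move=> hpi; elim: t => [|t IH] u /=.
  by move=> _; exists u, 0; split; [apply: ideal0 | rewrite expr0 mul1r addr0].
move=> hu; apply: (idmul_sub (pi_mult_ideal pi t.+1) _ hu).
move=> u1 v1 /IH [d [q [hq ->]]] /hpi [d' [q' [hq' ->]]].
exists (d * d'), (pi ^+ t * d * q' + q * (pi * d' + q')); split.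
  by apply: (idealD hPe); [apply: idealM | apply: idealMr].
by rewrite exprSr; ring.
Qed.

(* Induction on the largest [t <= e] with [v] in [P^t]: then [v = pi^t w + (P^e)] with
   [w] a unit modulo [P^e], while [u] is also a multiple of [pi^t] modulo [P^e]. *)
Lemma dvd_mod_idpow u v : dedekind D -> prime_ideal P -> ideal_nonzero P ->
  (forall m, (m <= e)%N -> idpow P m v -> idpow P m u) ->
  exists d q, idpow P e q /\ u = v * d + q.
Proof.
move=> hD hPp hnz H.
have hPe := idpow_ideal e hP.
have hM : maximal_ideal P by case: hD => _ _ hdim; apply: hdim.
have [pi [hpi hpiP]] := local_uniformizer e hD hPp hnz.
have hsub t := @idpow_sub_pi_mult pi t hpiP.
suff: forall k t, (t + k = e)%N -> idpow P t v -> exists d q, idpow P e q /\ u = v * d + q.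
  by move=> /(_ e 0%N); apply.
elim=> [|k IH] t htk hv.
  rewrite addn0 in htk; subst t; exists 0, u; split; first by apply: H.
  by rewrite mulr0 add0r.
case: (classic (idpow P t.+1 v)) => hv1; first by apply: (IH t.+1); rewrite ?addSnnS.
have hte : (t <= e)%N by rewrite -htk leq_addr.
have ht1e : (t.+1 <= e)%N by rewrite -htk addnS ltnS leq_addr.
have [w [q [hq ev]]] := hsub t v hv.
have hw : ~ P w.
  move=> hw; apply: hv1; rewrite ev; apply: idealD; first exact: idpow_ideal.
    by apply: idmul_mem => //; apply: idpow_exp.
  exact: idpow_mono hP ht1e _ hq.
have [a [r [hr e3]]] := maximal_inv_mod_pow e hM hw.
have [d' [q' [hq' eu]]] := hsub t u (H t hte hv).
exists (a * d'), (q' - q * a * d' + pi ^+ t * r * d'); split.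
  apply: (idealD hPe); last by apply: (idealMr _ hPe); apply: (idealM _ hPe).
  by apply: (idealB hPe) => //; apply: (idealMr _ hPe); apply: (idealMr _ hPe).
rewrite eu ev.
transitivity (pi ^+ t * (w * a) * d' + q * a * d' + (q' - q * a * d' + pi ^+ t * r * d'));
  last ring.
by rewrite e3; ring.
Qed.

Lemma dvd_mod_idpow_of_wP (K : D -> Prop) u v : dedekind D -> prime_ideal P ->
  ideal_nonzero P -> is_ideal K -> subsetD K (idpow P e) -> wP K P v u ->
  exists d q, idpow P e q /\ u = v * d + q.
Proof.
move=> hD hPp hnz hK hKe [w1 w2].
case: (classic (K v)) => hv.
  by exists 0, u; split; [apply: hKe; apply: w1 | rewrite mulr0 add0r].
apply: dvd_mod_idpow => // m hm hvm.
have [a [k [ha hk ->]]] := w2 hv m (idsum_l hK hvm).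
apply: idealD; [exact: idpow_ideal | exact: ha | exact: idpow_mono hP hm _ (hKe _ hk)].
Qed.

End DivisibilityModPower.

Section ProductCongruences.
Variables (D : idomainType) (A : D -> Prop).
Hypothesis hA : is_ideal A.

Lemma prod_congr_mod (I : Type) (s : seq I) (f g : I -> D) :
  (forall i, A (f i - g i)) -> A (\prod_(i <- s) f i - \prod_(i <- s) g i).
Proof.
move=> H; elim: s => [|x s IH]; first by rewrite !big_nil subrr; apply: ideal0.
rewrite !big_cons.
have -> : f x * \prod_(j <- s) f j - g x * \prod_(j <- s) g j =
  f x * (\prod_(j <- s) f j - \prod_(j <- s) g j) + (f x - g x) * \prod_(j <- s) g j by ring.
by apply: (idealD hA); [apply: (idealM _ hA) | apply: (idealMr _ hA)].
Qed.

Lemma prod_dvd_mod (I : Type) (s : seq I) (u v : I -> D) :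
  (forall i, exists d q, A q /\ u i = v i * d + q) ->
  exists d q, A q /\ \prod_(i <- s) u i = \prod_(i <- s) v i * d + q.
Proof.
move=> H; elim: s => [|x s [d [q [hq IH]]]].
  by exists 1, 0; split; [apply: ideal0 | rewrite !big_nil mulr1 addr0].
have [d1 [q1 [hq1 e1]]] := H x.
rewrite !big_cons IH e1.
exists (d1 * d), (q1 * (\prod_(j <- s) v j * d + q) + v x * d1 * q); split; last by ring.
by apply: (idealD hA); [apply: (idealMr _ hA) | apply: (idealM _ hA)].
Qed.

End ProductCongruences.

Lemma falling_dvd_mod_of_Pordering (D : idomainType) (K P X : D -> Prop) e
    (bb : nat -> D) m c :
  dedekind D -> prime_ideal P -> ideal_nonzero P -> is_ideal K -> subsetD K (idpow P e) ->
  is_Pordering K P X bb -> X c ->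
  exists d q, idpow P e q /\ falling bb c m = falling bb (bb m) m * d + q.
Proof.
move=> hD hP hnz hK hKe [_ hord] hc; case: (posnP m) => hm0.
  exists 1, 0; split; first exact: ideal0 (idpow_ideal e (prime_ideal_ideal hP)).
  by rewrite /falling hm0 !big_ord0 mulr1 addr0.
apply: dvd_mod_idpow_of_wP hKe _ => //; first exact: prime_ideal_ideal.
by apply: (hord m hm0 c hc); split.
Qed.

Lemma ltn_sum_ord r (f g : 'I_r -> nat) i0 :
  (forall i, f i <= g i)%N -> (f i0 < g i0)%N -> (\sum_i f i < \sum_i g i)%N.
Proof.
move=> H h0; rewrite (bigD1 i0) //= [X in (_ < X)%N](bigD1 i0) //=.
by rewrite -addSn leq_add // leq_sum.
Qed.

Section FallingSums.
Variables (D : idomainType) (r N n : nat) (J : D -> Prop) (Q : 'I_n -> D -> Prop).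
Variables (X : 'I_r -> D -> Prop) (a : 'I_r -> nat -> D) (al : 'I_n -> 'I_r -> nat -> D).
Variable b : {ffun 'I_r -> nat} -> D.
Hypotheses (hJ : is_ideal J) (hQ : forall l, is_ideal (Q l)).
Hypothesis hJQ : forall x, (forall l, idsum J (Q l) x) -> J x.
Hypothesis hb : forall k : {ffun 'I_r -> nat}, (exists i, (N <= k i)%N) -> J (b k).
Hypothesis ha : forall l i j, Q l (a i j - al l i j).
Hypothesis hXal : forall l i j, X i (al l i j).
Hypothesis hal : forall l i m c, X i c ->
  exists d q, Q l q /\ falling (al l i) c m = falling (al l i) (al l i m) m * d + q.
Hypothesis hsum : forall c, (forall i, X i (c i)) ->
  J (\sum_(k : {ffun 'I_r -> 'I_N})
       b [ffun i => (k i : nat)] * mfalling a c [ffun i => (k i : nat)]).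

Implicit Types (l : 'I_n) (m k : {ffun 'I_r -> nat}) (c : 'I_r -> D).

Definition node l m i := al l i (m i).

Definition terms_in_J m := forall c, (forall i, X i (c i)) -> J (b m * mfalling a c m).

Lemma mfalling_node_vanish l m k i : (m i < k i)%N -> Q l (mfalling a (node l m) k).
Proof.
move=> hi; rewrite /mfalling (bigD1 i) //=; apply: (idealMr _ (hQ l)).
rewrite /falling (bigD1 (Ordinal hi)) //=; apply: (idealMr _ (hQ l)).
by rewrite -opprB; apply: idealN.
Qed.

Lemma mfalling_congr_al l x m :
  Q l (mfalling a x m - \prod_i falling (al l i) (x i) (m i)).
Proof.
apply: prod_congr_mod => // i; apply: prod_congr_mod => // j.
have -> : x i - a i j - (x i - al l i j) = - (a i j - al l i j) by ring.
exact: idealN (hQ l) (ha l i j).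
Qed.

Lemma node_term_mod l m : (forall i, (m i < N)%N) ->
  (forall k, (\sum_i k i < \sum_i m i)%N -> terms_in_J k) ->
  idsum J (Q l) (b m * mfalling a (node l m) m).
Proof.
move=> hmN IH.
have hZ := idsum_ideal hJ (hQ l).
pose k0 : {ffun 'I_r -> 'I_N} := [ffun i => Ordinal (hmN i)].
have hk0 : [ffun i => (k0 i : nat)] = m by apply/ffunP => i; rewrite !ffunE.
have := hsum (fun i => hXal l i (m i)); rewrite (bigD1 k0) //= hk0.
set rest := \sum_(k | _) _ => hS.
suff hrest : idsum J (Q l) rest.
  by rewrite -[_ * _](addrK rest); apply: (idealB hZ) => //; apply: idsum_l.
apply: ideal_sum hZ _ => k hk; set kk := [ffun i => (k i : nat)].
case: (classic (forall i, (kk i <= m i)%N)) => hle.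
  suff hlt : (\sum_i kk i < \sum_i m i)%N.
    by apply: (idsum_l (hQ l)); apply: (IH kk hlt (node l m)) => i; apply: hXal.
  have [i0 hi0] : exists i0, kk i0 != m i0.
    apply: NNPP => Hn; move/eqP: hk; apply; apply/ffunP => i; apply: ord_inj.
    have : kk i = m i by apply/eqP; apply: NNPP => h; apply: Hn; exists i; apply/negP.
    by rewrite /kk !ffunE => ->.
  by apply: (ltn_sum_ord (i0 := i0)) => //; rewrite ltn_neqAle hi0 hle.
have [i hi] : exists i, (m i < kk i)%N.
  apply: NNPP => Hn; apply: hle => i; rewrite leqNgt; apply/negP => h.
  by apply: Hn; exists i.
by apply: idsum_r => //; apply: (idealM _ (hQ l)); apply: mfalling_node_vanish hi.
Qed.

Lemma term_mod l m c : (forall i, X i (c i)) ->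
  idsum J (Q l) (b m * mfalling a (node l m) m) -> idsum J (Q l) (b m * mfalling a c m).
Proof.
move=> hc hnode.
have hZ := idsum_ideal hJ (hQ l).
set U := \prod_i falling (al l i) (c i) (m i).
set V := \prod_i falling (al l i) (node l m i) (m i).
have [d [q [hq eUV]]] : exists d q, Q l q /\ U = V * d + q.
  by apply: (@prod_dvd_mod D (Q l) (hQ l)) => i; apply: hal.
have -> : b m * mfalling a c m = b m * (mfalling a c m - U)
    + b m * mfalling a (node l m) m * d - b m * (mfalling a (node l m) m - V) * d + b m * q.
  by rewrite eUV; ring.
have hQZ x : Q l x -> idsum J (Q l) x by apply: idsum_r.
apply: (idealD hZ); last by apply: hQZ; apply: (idealM _ (hQ l)).
apply: (idealB hZ); last by apply/hQZ/(idealMr _ (hQ l))/(idealM _ (hQ l))/mfalling_congr_al.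
apply: (idealD hZ); last exact: (idealMr _ hZ).
by apply/hQZ/(idealM _ (hQ l))/mfalling_congr_al.
Qed.

Lemma all_terms_in_J m : terms_in_J m.
Proof.
have [M] := ubnP (\sum_i m i); elim: M m => // M IHM m hm c hc.
case: (classic (exists i, (N <= m i)%N)) => hN; first exact: (idealMr _ hJ (hb hN)).
have hmN i : (m i < N)%N by rewrite ltnNge; apply/negP => h; apply: hN; exists i.
apply: hJQ => l; apply: term_mod => //; apply: node_term_mod => // k hk.
by apply: IHM; apply: leq_trans hk _; rewrite -ltnS.
Qed.

End FallingSums.

Lemma idsum_big_idpow_prime (D : idomainType) n (P : 'I_n -> D -> Prop) (e : 'I_n -> nat)
    (J : D -> Prop) x :
  dim_le1 D -> is_ideal J -> (forall l, prime_ideal (P l) /\ ideal_nonzero (P l)) ->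
  (forall l l', eqsetD (P l) (P l') -> l = l') ->
  (forall l, idsum J (idpow (P l) (e l)) x) ->
  idsum J (\big[@idmul D/@idfull D]_(l < n) idpow (P l) (e l)) x.
Proof.
move=> hdim hJ hP hPinj H.
have hM l : maximal_ideal (P l) by case: (hP l) => ? ?; apply: hdim.
have hPi l : is_ideal (P l) by case: (hM l).
apply: idsum_big_idmul_comax => //; first by move=> l; apply: idpow_ideal.
  exact: index_enum_uniq.
move=> l l' hll'; apply: comax_idpow; first exact: idpow_ideal.
apply: comax_sym; apply: comax_idpow => //; apply: comax_sym.
by apply: maximal_comax_neq => // /hPinj ell'; rewrite ell' eqxx in hll'.
Qed.

Theorem mainTheorem4
  (D : idomainType) (hD : dedekind D)
  (r : nat) (hr : (1 <= r)%N)
  (I : 'I_r -> D -> Prop) (J : D -> Prop)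
  (hI : forall i, [/\ is_ideal (I i), ideal_nonzero (I i) & ideal_proper (I i)])
  (hJ : [/\ is_ideal J, ideal_nonzero J & ideal_proper J])
  (DI : 'I_r -> D -> Prop)
  (hDI : forall i, residue_system (I i) (DI i) /\ DI i 0)
  (K : D -> Prop) (hK : forall x, K x <-> ((forall i, I i x) /\ J x))
  (n : nat) (P : 'I_n -> D -> Prop) (e : 'I_n -> nat)
  (hP : forall l, prime_ideal (P l) /\ ideal_nonzero (P l))
  (hPinj : forall l l', eqsetD (P l) (P l') -> l = l')
  (he : forall l, (1 <= e l)%N)
  (hKfact : eqsetD K (\big[@idmul D/@idfull D]_(l < n) idpow (P l) (e l)))
  (al : 'I_n -> 'I_r -> nat -> D)
  (hal : forall l i, is_Pordering K (P l) (imgR K (DI i)) (al l i) /\ K (al l i 0%N))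
  (a : 'I_r -> nat -> D)
  (ha0 : forall i, K (a i 0%N))
  (ha : forall i j l, idsum (idpow (P l) (e l)) K (a i j - al l i j))
  (b : {ffun 'I_r -> nat} -> D) (N : nat)
  (hb : forall k : {ffun 'I_r -> nat}, (exists i, (N <= k i)%N) -> K (b k)) :
  (forall c : 'I_r -> D, (forall i, imgR K (DI i) (c i)) ->
     J (\sum_(k : {ffun 'I_r -> 'I_N}) b [ffun i => (k i : nat)] * mfalling a c [ffun i => (k i : nat)] - 0))
  <->
  (forall k : {ffun 'I_r -> nat}, forall c : 'I_r -> D, (forall i, imgR K (DI i) (c i)) ->
     J (b k * mfalling a c k - 0)).
Proof.
case: hJ => hJi _ _; case: (hD) => _ _ hdim.
pose Q l := idpow (P l) (e l).
have hPi l : is_ideal (P l) := prime_ideal_ideal (hP l).1.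
have hQ l : is_ideal (Q l) := idpow_ideal _ (hPi l).
have hKi : is_ideal K := eqset_ideal (fun x => iff_sym (hKfact x)) (big_idmul_ideal _ hQ).
have hKJ x : K x -> J x by move/hK => [].
have hKQ l x : K x -> Q l x by move/hKfact; apply: (big_idmul_sub hQ (mem_index_enum l)).
have hJQ x : (forall l, idsum J (Q l) x) -> J x.
  move/(idsum_big_idpow_prime hdim hJi hP hPinj).
  by apply: idsum_sub => // y /hKfact /hKJ.
split => [hsum k c hc | H c hc]; rewrite subr0; last first.
  by apply: ideal_sum => // k _; have := H [ffun i => (k i : nat)] c hc; rewrite subr0.
apply: (@all_terms_in_J D r N n J Q (fun i => imgR K (DI i)) a al b hJi hQ hJQ
  _ _ _ _ _ k c hc).
- by move=> k0 /hb /hKJ.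
- by move=> l i j; apply: idsum_sub (hQ l) (fun _ h => h) (hKQ l) _ (ha i j l).
- by move=> l i j; case: (hal l i) => [[hX _] _].
- move=> l i m c' hc'; case: (hP l) => hPl hPnz.
  exact: falling_dvd_mod_of_Pordering hD hPl hPnz hKi (hKQ l) (hal l i).1 hc'.
- by move=> c' hc'; have := hsum c' hc'; rewrite subr0.
Qed.
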